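(* Let $q$ be a prime power and $F/\mathbb{F}_q$ an algebraic function field with full constant field $\mathbb{F}_q$ of genus $g\geq 2$. For $n\geq 0$ let $A_n$ be the number of effective divisors of degree $n$ of $F$, for $r\geq 1$ let $B_r$ be the number of places of degree $r$ of $F$, let $\Sigma_2=q^{g-1}\sum_{n=0}^{g-2}A_n/q^n$, let $\Delta_2=\{r:1\leq r\leq g-2,\ B_r\geq 1\}$ and $\Delta_2'=\Delta_2\setminus\{1\}$. (1) Suppose $B_1\geq 1$. Let $(m_r)_{r\in\Delta_2}$ be integers with $m_r\geq 0$ and $\sum_{r\in\Delta_2} r\,m_r\leq g-2$. Then $$\Sigma_2\geq q^{g-1}\prod_{r\in\Delta_2}\left[\sum_{b=0}^{m_r}\frac{1}{q^{rb}}\binom{B_r+b-1}{b}\right].$$ (2) Let $r_1,\dots,r_u$ be distinct elements of $\Delta_2'$. Then $$\Sigma_2\geq q^{g-1}\sum_{b_1=0}^{g-2}\frac{1}{q^{b_1}}\binom{B_1+b_1-1}{b_1}+q^{g-1}\sum_{i=1}^u\left[\sum_{b_1=0}^{(g-2)\bmod r_i}\frac{1}{q^{b_1}}\binom{B_1+b_1-1}{b_1}\right]\left[\sum_{b=0}^{\lfloor\frac{g-2}{r_i}\rfloor}\frac{1}{q^{r_ib}}\binom{B_{r_i}+b-1}{b}-1\right].$$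
   Context: $(g-2)\bmod r$ denotes the remainder of the Euclidean division of $g-2$ by $r$. Binomial coefficients $\binom{B+b-1}{b}$ (the number of multisets of size $b$ from a set of size $B$) follow the convention that for $B=0$ they equal $1$ if $b=0$ and $0$ if $b\geq 1$. *)

From HB Require Import structures.
From mathcomp Require Import all_boot all_order all_algebra.
From Stdlib Require List.
Set Implicit Arguments. Unset Strict Implicit. Unset Printing Implicit Defensive.
Import Order.TTheory GRing.Theory Num.Theory.
Local Open Scope ring_scope.


Definition alg_over (K : finFieldType) (F : fieldType) (iota : {rmorphism K -> F})
  (y : F) : Prop :=
  exists p : {poly K}, p != 0 /\ (map_poly iota p).[y] = 0.

Definition in_Kx (K : finFieldType) (F : fieldType) (iota : {rmorphism K -> F})
  (x z : F) : Prop :=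
  exists a b : {poly K}, (map_poly iota b).[x] != 0 /\
    z = (map_poly iota a).[x] / (map_poly iota b).[x].

Definition is_function_field (K : finFieldType) (F : fieldType)
  (iota : {rmorphism K -> F}) : Prop :=
  exists x : F, ~ alg_over iota x /\
    exists (n : nat) (e : 'I_n -> F), forall y : F,
      exists c : 'I_n -> F, (forall i, in_Kx iota x (c i)) /\
        y = \sum_(i < n) c i * e i.

Definition full_constant_field (K : finFieldType) (F : fieldType)
  (iota : {rmorphism K -> F}) : Prop :=
  forall y : F, alg_over iota y -> exists c : K, y = iota c.

(* valuation rings of F/K; places are in bijection with them (P = maximal
   ideal of O), so we represent a place by its valuation ring *)
Definition is_valring (K : finFieldType) (F : fieldType)
  (iota : {rmorphism K -> F}) (O : F -> Prop) : Prop :=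
  [/\ (forall c : K, O (iota c)),
      (forall a b, O a -> O b -> [/\ O (a + b), O (a * b) & O (- a)]),
      (exists z, ~ O z) &
      (forall z : F, z != 0 -> O z \/ O z^-1)].

Definition place (K : finFieldType) (F : fieldType) (iota : {rmorphism K -> F}) :=
  {O : F -> Prop | is_valring iota O}.

Definition in_P (F : fieldType) (O : F -> Prop) (a : F) : Prop :=
  O a /\ (a = 0 \/ ~ O a^-1).

(* deg P = r : the residue field O/P has dimension r over K *)
Definition is_degree (K : finFieldType) (F : fieldType) (iota : {rmorphism K -> F})
  (P : place iota) (r : nat) : Prop :=
  let O := sval P in
  exists t : 'I_r -> F,
    [/\ (forall i, O (t i)),
        (forall a, O a -> exists c : 'I_r -> K,
                          in_P O (a - \sum_(i < r) iota (c i) * t i)) &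
        (forall c : 'I_r -> K, in_P O (\sum_(i < r) iota (c i) * t i) ->
                               forall i, c i = 0)].

Definition ord (K : finFieldType) (F : fieldType) (iota : {rmorphism K -> F})
  (P : place iota) (x : F) (n : int) : Prop :=
  let O := sval P in
  x != 0 /\
  exists t : F, [/\ t != 0, in_P O t,
    (forall a, in_P O a -> exists b, O b /\ a = t * b) &
    exists u : F, [/\ O u, O u^-1 & x = t ^ n * u]].

(* divisors: finitely supported functions place -> int *)
Definition div_fin (K : finFieldType) (F : fieldType) (iota : {rmorphism K -> F})
  (D : place iota -> int) : Prop :=
  exists s : list (place iota), forall P, D P != 0 -> List.In P s.

Definition div_deg (K : finFieldType) (F : fieldType) (iota : {rmorphism K -> F})
  (D : place iota -> int) (m : int) : Prop :=
  exists s : list (place iota),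
    [/\ List.NoDup s, (forall P, D P != 0 -> List.In P s) &
    exists d : place iota -> nat,
      (forall P, List.In P s -> is_degree P (d P)) /\
      \sum_(P <- s) D P * (d P)%:Z = m].

Definition eff_div_deg (K : finFieldType) (F : fieldType) (iota : {rmorphism K -> F})
  (D : place iota -> nat) (n : nat) : Prop :=
  exists s : list (place iota),
    [/\ List.NoDup s, (forall P, D P <> 0%N -> List.In P s) &
    exists d : place iota -> nat,
      (forall P, List.In P s -> is_degree P (d P)) /\
      (\sum_(P <- s) D P * d P)%N = n].

Definition in_L (K : finFieldType) (F : fieldType) (iota : {rmorphism K -> F})
  (D : place iota -> int) (x : F) : Prop :=
  x = 0 \/ forall P n, ord P x n -> - D P <= n.

Definition dim_L (K : finFieldType) (F : fieldType) (iota : {rmorphism K -> F})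
  (D : place iota -> int) (l : nat) : Prop :=
  exists b : 'I_l -> F,
    [/\ (forall i, in_L D (b i)),
        (forall x, in_L D x -> exists c : 'I_l -> K,
                                x = \sum_(i < l) iota (c i) * b i) &
        (forall c : 'I_l -> K, \sum_(i < l) iota (c i) * b i = 0 ->
                               forall i, c i = 0)].

(* genus g = max { deg D - ell(D) + 1 : D divisor }  (Stichtenoth 1.4.15) *)
Definition is_genus (K : finFieldType) (F : fieldType) (iota : {rmorphism K -> F})
  (g : nat) : Prop :=
  (forall (D : place iota -> int) m l, div_fin D -> div_deg D m -> dim_L D l -> m - l%:Z + 1 <= g%:Z) /\
  exists (D : place iota -> int) m l, [/\ div_fin D, div_deg D m, dim_L D l & m - l%:Z + 1 = g%:Z].

Definition card_is (T : Type) (X : T -> Prop) (N : nat) : Prop :=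
  exists f : 'I_N -> T, injective f /\ forall x, X x <-> exists i, f i = x.

(* Fix an enumeration of the [B_r] places of degree [r] for each [r].  A family of
   multisets, one multiset of degree-[r] places for each [r], defines an effective
   divisor whose degree is [sum_r r * (size of the r-th multiset)], and distinct
   families define distinct divisors.  Weighting a family of degree [n] by [q^-n],
   any set of families of degree at most [g - 2] therefore has total weight at most
   [sum_(n <= g - 2) A_n q^-n = Sigma_2 / q^(g-1)].  The families whose [r]-th
   multiset has size in [[lo_r, hi_r]] for every [r] form a box of total weight
   [prod_r sum_(lo_r <= b <= hi_r) q^(-rb) C(B_r + b - 1, b)], as [C(B + b - 1, b)]
   counts the multisets of size [b] on [B] elements.  Part (1) is the box
   [[0, m_r]]; part (2) is the disjoint union of the box [b_1 <= g - 2] and, for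
   each [r_i], the box [b_1 <= (g - 2) mod r_i, 1 <= b_(r_i) <= (g - 2) div r_i],
   all other sizes being 0. *)

From HB Require Import structures.
From mathcomp Require Import all_boot all_order all_algebra.
From Stdlib Require Import ClassicalEpsilon.
From Stdlib Require List.
Import Order.TTheory GRing.Theory Num.Theory.

Set Implicit Arguments.
Unset Strict Implicit.
Unset Printing Implicit Defensive.

Local Open Scope ring_scope.

Section BigOnly.
Variables (T : Type) (idx : T) (op : Monoid.com_law idx).

Lemma big_ord_only1 n i (F : nat -> T) : (i < n)%N ->
  (forall r, r != i -> F r = idx) -> \big[op/idx]_(r < n) F r = F i.
Proof.
move=> lt_in F1; rewrite (bigD1 (Ordinal lt_in)) //= big1 ?Monoid.mulm1 // => r.
by rewrite -val_eqE => /F1.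
Qed.

Lemma big_ord_only2 n i j (F : nat -> T) : (i < n)%N -> (j < n)%N -> i != j ->
  (forall r, r != i -> r != j -> F r = idx) ->
  \big[op/idx]_(r < n) F r = op (F i) (F j).
Proof.
move=> lt_in lt_jn ij F1.
rewrite (bigD1 (Ordinal lt_in)) // (bigD1 (Ordinal lt_jn)) /=; last first.
  by rewrite -val_eqE /= eq_sym.
rewrite big1 ?Monoid.mulm1 // => r /andP [].
by rewrite -!val_eqE /= => /F1 F1r /F1r.
Qed.

Lemma big_ord_cond_pos L (P : pred nat) (F : nat -> T) :
  \big[op/idx]_(r < L.+1) (if (0 < r)%N && P r then F r else idx)
  = \big[op/idx]_(1 <= r < L.+1 | P r) F r.
Proof.
rewrite -big_mkcond -(big_mkord (fun r => (0 < r)%N && P r)) big_ltn_cond //=.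
by rewrite big_nat_cond [RHS]big_nat_cond; apply: eq_bigl => -[|r].
Qed.

End BigOnly.

Lemma big_has_disjoint (V : nmodType) (T : finType) (I : eqType)
    (P : I -> pred T) (s : seq I) (w : T -> V) : uniq s ->
  (forall i j x, i \in s -> j \in s -> i != j -> P i x -> P j x -> False) ->
  \sum_(x | has (P ^~ x) s) w x = \sum_(i <- s) \sum_(x | P i x) w x.
Proof.
elim: s => [|i s IHs] /=; first by rewrite big_nil big_pred0.
case/andP => i_notin s_uniq disj; rewrite big_cons -IHs //; last first.
  by move=> j k x js ks; apply: disj; rewrite inE ?js ?ks orbT.
rewrite (bigID (P i)) /=; congr (_ + _); apply: eq_bigl => x.
  by case: (P i x); rewrite ?andbF.
case Pix: (P i x); rewrite ?andbF ?andbT //=; apply/esym/negbTE/hasPn => j js.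
apply/negP => Pjx; apply: (disj i j x); rewrite ?inE ?eqxx ?js ?orbT //.
by apply: contraNneq i_notin => ->.
Qed.

Lemma In_mem (T : eqType) (x : T) (s : seq T) : List.In x s <-> x \in s.
Proof.
elim: s => [|y s IHs] //=; rewrite in_cons; split.
  by case=> [->|/IHs ->]; rewrite ?eqxx ?orbT.
by case/orP => [/eqP ->|/IHs]; [left|right].
Qed.

Lemma NoDup_map_uniq (T : eqType) (U : Type) (h : T -> U) (s : seq T) :
  injective h -> uniq s -> List.NoDup (map h s).
Proof.
move=> h_inj; elim: s => [|x s IHs] /=; first by constructor.
case/andP => x_notin s_uniq; constructor; last exact: IHs.
by case/List.in_map_iff => y [/h_inj -> /In_mem]; apply/negP.
Qed.

Lemma card_le_card_is (T : finType) (U : Type) (X : U -> Prop) m (V : pred T) (h : T -> U) :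
  card_is X m -> {in V &, injective h} -> (forall x, V x -> X (h x)) -> (#|V| <= m)%N.
Proof.
move=> [e [_ e_onto]] h_inj hX.
have [k hk] : exists k : {x | V x} -> 'I_m, forall x, e (k x) = h (val x).
  apply: (@fin_all_exists _ (fun=> 'I_m) (fun x i => e i = h (val x))) => -[x Vx].
  exact/e_onto/hX.
have k_inj : injective k.
  move=> x1 x2 /(congr1 e); rewrite !hk => /h_inj e12; apply: val_inj.
  by apply: e12; [exact: valP|exact: valP].
by rewrite -card_sig -[m]card_ord (leq_card _ k_inj).
Qed.

(* The multisets of [B] places of degree [r] with size in [[lo, hi]], each weighted
   by [Q ^- degree]; the paper's truncated series are [mset_series Q r (B r) 0 M]. *)
Definition mset_series (R : unitRingType) (Q : R) (r B lo hi : nat) : R :=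
  \sum_(lo <= b < hi.+1) (Q ^+ (r * b))^-1 * ('C(B + b - 1, b))%:R.

Section MultisetSeries.
Variables (R : unitRingType) (Q : R) (r B : nat).

Lemma mset_series00 : mset_series Q r B 0 0 = 1.
Proof. by rewrite /mset_series big_nat1 muln0 expr0 invr1 bin0 mul1r. Qed.

Lemma mset_series1 hi : mset_series Q r B 1 hi = mset_series Q r B 0 hi - 1.
Proof.
by rewrite /mset_series [in RHS]big_ltn // muln0 expr0 invr1 bin0 mul1r (addrC 1) addrK.
Qed.

End MultisetSeries.

(* A multiset on [{0, ..., B - 1}] with multiplicities at most [G] is encoded by
   its multiplicity function, padded with zeros up to index [N >= B - 1]. *)
Section Multisets.
Variables N G : nat.
Local Notation mvec := {ffun 'I_N.+1 -> 'I_G.+1}.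

Definition multiset_on (B : nat) (y : mvec) : bool :=
  [forall i : 'I_N.+1, (B <= i)%N ==> (y i == ord0)].

Definition msize (y : mvec) : nat := (\sum_i (y i : nat))%N.

Lemma sum_nth_ord (s : seq nat) : (size s <= N.+1)%N ->
  (\sum_(i < N.+1) nth 0%N s i = \sum_(x <- s) x)%N.
Proof.
move=> hs; rewrite [RHS](big_nth 0%N) big_mkord (big_ord_widen _ _ hs) [RHS]big_mkcond.
by apply: eq_bigr => i _; case: ltnP => // le_s_i; rewrite nth_default.
Qed.

Lemma card_multiset_on0 b : #|[set y | multiset_on 0 y & msize y == b]| = (b == 0%N).
Proof.
have y0 y : multiset_on 0 y = (y == [ffun=> ord0]).
  apply/forallP/eqP => [y0|-> i]; last by rewrite ffunE.
  by apply/ffunP => i; rewrite ffunE; apply/eqP/(implyP (y0 i)).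
have msize0 : msize [ffun=> ord0] = 0%N by rewrite /msize big1 // => i; rewrite ffunE.
case: eqP => [->|b_neq0].
  rewrite /= -(cards1 ([ffun=> ord0] : mvec)); apply: eq_card => y.
  by rewrite !inE y0 andb_idr // => /eqP ->; rewrite msize0.
apply: eq_card0 => y; rewrite !inE y0.
by apply/andP => -[/eqP -> /eqP]; rewrite msize0 => /esym.
Qed.

Lemma card_multiset_on B b : (B <= N.+1)%N -> (b <= G)%N ->
  #|[set y | multiset_on B y & msize y == b]| = 'C(B + b - 1, b).
Proof.
case: B => [_|m leBN] leb.
  by rewrite card_multiset_on0; case: b {leb} => [|b]; rewrite ?bin0 // add0n subn1 bin_small.
rewrite addSn subn1 /= -(bin_sub (leq_addl m b)) addnK -card_ord_partitions.
pose pad (t : m.+1.-tuple 'I_b.+1) : mvec :=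
  [ffun i : 'I_N.+1 => inord (nth 0%N (map val t) i)].
have padE t (i : 'I_N.+1) : pad t i = nth 0%N (map val t) i :> nat.
  rewrite ffunE inordK //; case: (ltnP i (size (map val t))) => hi.
    2: by rewrite nth_default.
  by rewrite size_map in hi; rewrite (nth_map ord0) // (leq_trans (ltn_ord _)).
have msize_pad t : msize (pad t) = (\sum_(j <- t) j)%N.
  rewrite -(big_map val xpredT id) -sum_nth_ord ?size_map ?size_tuple //.
  by apply: eq_bigr => i _; rewrite padE.
have pad_inj : injective pad.
  move=> t1 t2 e; apply/val_inj/(inj_map val_inj)/(@eq_from_nth _ 0%N).
    by rewrite !size_map !size_tuple.
  move=> i; rewrite size_map size_tuple => hi.
  have hiN : (i < N.+1)%N by apply: leq_trans hi leBN.
  by rewrite -(padE t1 (Ordinal hiN)) -(padE t2 (Ordinal hiN)) e.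
rewrite -(card_imset _ pad_inj); apply: eq_card => y; rewrite !inE.
apply/andP/imsetP => [[/forallP y_on /eqP y_size]|[t + ->]]; last first.
  rewrite inE msize_pad => ->; split=> //; apply/forallP => i; apply/implyP => hi.
  by rewrite -val_eqE /= padE nth_default // size_map size_tuple.
have yle i : (y i <= b)%N by rewrite -y_size /msize (bigD1 i) //= leq_addr.
pose t := [tuple (inord (y (inord i)) : 'I_b.+1) | i < m.+1].
have yE : y = pad t.
  apply/ffunP => i; apply/val_inj; rewrite /= padE.
  case: (ltnP i m.+1) => hi; last first.
    rewrite nth_default; last by rewrite (size_map val) size_tuple.
    by move: (y_on i); rewrite hi => /eqP ->.
  rewrite (nth_map ord0) ?size_tuple // -[i : nat]/(Ordinal hi : nat) nth_mktuple /=.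
  by rewrite inordK ?ltnS // inord_val.
by exists t; rewrite // inE -msize_pad -yE y_size.
Qed.

Lemma sum_multiset_on (F : fieldType) (Q : F) r B lo hi :
  (B <= N.+1)%N -> (hi <= G)%N ->
  \sum_(y | multiset_on B y && (lo <= msize y <= hi)%N) (Q ^+ (r * msize y))^-1
  = mset_series Q r B lo hi.
Proof.
move=> leBN lehi; have lt_size y : (lo <= msize y <= hi)%N -> (msize y < G.+1)%N.
  by case/andP=> _ h; rewrite ltnS (leq_trans h).
rewrite (partition_big (fun y => inord (msize y) : 'I_G.+1)
                      (fun b : 'I_G.+1 => lo <= b <= hi)%N); last first.
  by move=> y /andP [_ h]; rewrite inordK ?lt_size.
rewrite /mset_series big_geq_mkord (big_ord_widen_cond G.+1 (fun b => lo <= b)%N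
  (fun b => (Q ^+ (r * b))^-1 * ('C(B + b - 1, b))%:R)) ?ltnS //.
apply: eq_big => [b|b hb]; first by rewrite andbC.
rewrite (eq_bigr (fun _ => (Q ^+ (r * b))^-1)); last first.
  by move=> y /andP [/andP [_ hy] /eqP <-]; rewrite inordK ?lt_size.
rewrite sumr_const mulrC mulr_natl -(card_multiset_on leBN (leq_trans _ lehi)).
  2: by case/andP: hb.
congr (_ *+ _); apply: eq_card => y; rewrite !inE.
apply/andP/andP => [[/andP [-> hy] /eqP <-]|[-> /eqP hy]]; first by rewrite inordK ?lt_size.
by rewrite hy hb; split=> //; apply/eqP/val_inj; rewrite /= inordK.
Qed.

Lemma msize_multiset_on B y : (B <= N.+1)%N -> multiset_on B y ->
  msize y = (\sum_(i < B) y (inord i))%N.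
Proof.
move=> leBN /forallP y_on; rewrite (big_ord_widen N.+1 (fun i => nat_of_ord (y (inord i)))) //.
rewrite big_mkcond; apply: eq_bigr => i _; rewrite inord_val.
by case: ltnP => // le_B_i; move: (y_on i); rewrite le_B_i => /eqP ->.
Qed.

End Multisets.

Section Families.
Variables (n N G : nat) (Bs : nat -> nat).
Hypothesis Bs_le : forall r, (r < n)%N -> (Bs r <= N.+1)%N.

Definition mfamily := {ffun 'I_n -> {ffun 'I_N.+1 -> 'I_G.+1}}.

Definition family_deg (x : mfamily) : nat := (\sum_(r < n) r * msize (x r))%N.

Definition wf_family (x : mfamily) : bool :=
  [forall r : 'I_n, multiset_on (Bs r) (x r)].

Definition in_box (lo hi : nat -> nat) (x : mfamily) : bool :=
  [forall r : 'I_n, multiset_on (Bs r) (x r) && (lo r <= msize (x r) <= hi r)%N].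

Lemma in_box_wf lo hi x : in_box lo hi x -> wf_family x.
Proof. by move=> /forallP x_in; apply/forallP => r; case/andP: (x_in r). Qed.

Lemma family_deg_box lo hi x :
  in_box lo hi x -> (family_deg x <= \sum_(r < n) r * hi r)%N.
Proof.
move=> /forallP x_in; apply: leq_sum => r _.
by case/and3P: (x_in r) => _ _ le_hi; rewrite leq_mul2l le_hi orbT.
Qed.

Lemma in_box_disjoint (lo1 hi1 lo2 hi2 : nat -> nat) (r : 'I_n) x : (hi1 r < lo2 r)%N ->
  in_box lo1 hi1 x -> in_box lo2 hi2 x -> False.
Proof.
move=> lt12 /forallP /(_ r) /and3P [_ _ le1] /forallP /(_ r) /and3P [_ le2 _].
by move: (leq_trans le2 le1); rewrite leqNgt lt12.
Qed.

Lemma box_weight (F : fieldType) (Q : F) lo hi :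
  (forall r, (r < n)%N -> (hi r <= G)%N) ->
  \sum_(x | in_box lo hi x) (Q ^+ family_deg x)^-1
  = \prod_(r < n) mset_series Q r (Bs r) (lo r) (hi r).
Proof.
move=> hiG.
under [RHS]eq_bigr => r _ do
  rewrite -(sum_multiset_on Q r _ (Bs_le (ltn_ord r)) (hiG _ (ltn_ord r))).
rewrite bigA_distr_big_dep; apply: eq_big => [x|x _]; last by rewrite prodfV prodrXr.
by apply/forallP/familyP => x_in r; move: (x_in r).
Qed.

End Families.

Section ValuationRings.
Variables (K : finFieldType) (F : fieldType) (iota : {rmorphism K -> F}).
Variable O : F -> Prop.
Hypothesis O_valring : is_valring iota O.

Lemma valringK c : O (iota c).
Proof. by case: O_valring. Qed.

Lemma valring0 : O 0.
Proof. by rewrite -(rmorph0 iota); apply: valringK. Qed.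

Lemma valring1 : O 1.
Proof. by rewrite -(rmorph1 iota); apply: valringK. Qed.

Lemma valringD a b : O a -> O b -> O (a + b).
Proof. by case: O_valring => _ O_ring _ _ Oa Ob; case: (O_ring a b Oa Ob). Qed.

Lemma valringM a b : O a -> O b -> O (a * b).
Proof. by case: O_valring => _ O_ring _ _ Oa Ob; case: (O_ring a b Oa Ob). Qed.

Lemma valringN a : O a -> O (- a).
Proof. by case: O_valring => _ O_ring _ _ Oa; case: (O_ring a a Oa Oa). Qed.

Lemma valring_lincomb m (t : 'I_m -> F) (c : 'I_m -> K) :
  (forall i, O (t i)) -> O (\sum_(i < m) iota (c i) * t i).
Proof.
move=> Ot; apply: (big_ind O) => [|a b|i _]; first exact: valring0.
  exact: valringD.
by apply: valringM => //; apply: valringK.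
Qed.

Lemma valring_inv_sum a b : a != 0 -> a + b != 0 ->
  O (b / a) -> O (a + b)^-1 -> O a^-1.
Proof.
move=> a0 ab0 Oba Oi; have -> : a^-1 = (b / a + 1) * (a + b)^-1.
  by rewrite -[1](divff a0) -mulrDl addrC mulrAC divff // mul1r.
by apply: valringM => //; apply: valringD => //; exact: valring1.
Qed.

Lemma in_PD x y : in_P O x -> in_P O y -> in_P O (x + y).
Proof.
move=> [Ox Px] [Oy Py]; split; first exact: valringD.
have [->|xy0] := eqVneq (x + y) 0; [by left|right=> Oi].
have [x0|x0] := eqVneq x 0.
  by case: Py => [y0|]; [move: xy0; rewrite x0 y0 addr0 eqxx|apply; rewrite -[y]add0r -x0].
have [y0|y0] := eqVneq y 0.
  by case: Px => [x0'|]; [move: x0; rewrite x0' eqxx|apply; rewrite -[x]addr0 -y0].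
have xy : x / y != 0 by rewrite mulf_neq0 ?invr_eq0.
case: O_valring => _ _ _ /(_ _ xy) [Oxy|Oyx].
  case: Py => [/eqP|/(_ (valring_inv_sum y0 _ Oxy _))] //; first by rewrite (negbTE y0).
  by apply; rewrite addrC.
case: Px => [/eqP|/(_ (valring_inv_sum x0 xy0 _ Oi))] //; first by rewrite (negbTE x0).
by apply; rewrite -invf_div.
Qed.

Lemma in_PN x : in_P O x -> in_P O (- x).
Proof.
move=> [Ox [->|Px]]; first by rewrite oppr0; split; [exact: valring0|left].
by split; [exact: valringN|right; rewrite invrN => /valringN; rewrite opprK].
Qed.

End ValuationRings.

Section Degrees.
Variables (K : finFieldType) (F : fieldType) (iota : {rmorphism K -> F}).

(* Reduction modulo [P] makes [c |-> sum_i c_i t_i] an injection of [K^r] into [K^r']. *)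
Lemma is_degree_le (P : place iota) r r' :
  is_degree P r -> is_degree P r' -> (r <= r')%N.
Proof.
case: P => O O_valring; rewrite /is_degree /=.
move=> [t [Ot _ t_free]] [t' [Ot' t'_span _]].
pose phi (c : {ffun 'I_r -> K}) : {ffun 'I_r' -> K} :=
  finfun (sval (constructive_indefinite_description _
     (t'_span _ (valring_lincomb O_valring c Ot)))).
have phiP (c : {ffun _ -> K}) :
    in_P O (\sum_(i < r) iota (c i) * t i - \sum_(i < r') iota (phi c i) * t' i).
  rewrite /phi; case: constructive_indefinite_description => c' /= H.
  by congr (in_P O (_ - _)): H; apply: eq_bigr => i _; rewrite ffunE.
have phi_inj : injective phi.
  move=> c1 c2 e; apply/ffunP => i; apply/eqP; rewrite -subr_eq0; apply/eqP.
  have := in_PD O_valring (phiP c1) (in_PN O_valring (phiP c2)).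
  rewrite e opprB addrA subrK -sumrB => H.
  have {H} : in_P O (\sum_(i < r) iota ((c1 - c2) i) * t i).
    by congr (in_P O _): H; apply: eq_bigr => j _; rewrite !ffunE rmorphB mulrBl.
  by move/t_free/(_ i); rewrite !ffunE.
have := leq_card _ phi_inj; rewrite !card_ffun !card_ord.
by rewrite leq_exp2l // card_finNzRing_gt1.
Qed.

Lemma is_degree_unique (P : place iota) r r' :
  is_degree P r -> is_degree P r' -> r = r'.
Proof.
by move=> h1 h2; apply/eqP; rewrite eqn_leq !(is_degree_le h1 h2, is_degree_le h2 h1).
Qed.

End Degrees.

Section PlaceFamilies.
Variables (K : finFieldType) (F : fieldType) (iota : {rmorphism K -> F}).
Variables (n N G : nat) (Bs : nat -> nat) (f : forall r, 'I_(Bs r) -> place iota).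
Hypothesis Bs_le : forall r, (r < n)%N -> (Bs r <= N.+1)%N.
Hypothesis f_inj : forall r, injective (@f r).
Hypothesis f_deg : forall r i, is_degree (@f r i) r.

Local Notation mfamily := (mfamily n N G).
Local Notation index := {r : 'I_n & 'I_(Bs r)}.

Definition fplace (p : index) : place iota := @f (tag p) (tagged p).

Lemma fplace_inj : injective fplace.
Proof.
move=> [r1 i1] [r2 i2]; rewrite /fplace /= => e.
have r12 : r1 = r2 by apply/val_inj/(is_degree_unique (f_deg i1)); rewrite e.
by case: r2 / r12 i2 e => i2 /f_inj ->.
Qed.

Definition eq_place (P P' : place iota) : bool :=
  if excluded_middle_informative (P = P') then true else false.

Lemma eq_placeP P P' : reflect (P = P') (eq_place P P').
Proof. by rewrite /eq_place; case: excluded_middle_informative => h; constructor. Qed.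

Definition family_divisor (x : mfamily) (P : place iota) : nat :=
  (\sum_(p : index | eq_place (fplace p) P) x (tag p) (inord (tagged p)))%N.

Lemma family_divisor_fplace x p :
  family_divisor x (fplace p) = x (tag p) (inord (tagged p)) :> nat.
Proof.
rewrite /family_divisor (big_pred1 p) // => p'.
by apply/eq_placeP/eqP => [/fplace_inj|->].
Qed.

Lemma family_divisor_inj : {in wf_family Bs &, injective family_divisor}.
Proof.
move=> x1 x2 /forallP wf1 /forallP wf2 e; apply/ffunP => r; apply/ffunP => j.
case: (ltnP j (Bs r)) => hj.
  have := congr1 (fun D => D (fplace (Tagged _ (Ordinal hj)))) e.
  by rewrite !family_divisor_fplace /= inord_val => /val_inj.
by move: (wf1 r) (wf2 r) => /forallP /(_ j) + /forallP /(_ j); rewrite hj => /eqP -> /eqP ->.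
Qed.

Definition place_deg (P : place iota) : nat :=
  match excluded_middle_informative (exists r, is_degree P r) with
  | left h => sval (constructive_indefinite_description _ h)
  | right _ => 0%N
  end.

Lemma place_deg_fplace p : place_deg (fplace p) = tag p.
Proof.
rewrite /place_deg; case: excluded_middle_informative => [h|[]].
  2: by exists (tag p); apply: f_deg.
case: constructive_indefinite_description => r /= hr.
exact: is_degree_unique hr (f_deg _).
Qed.

Lemma family_divisor_eff x :
  wf_family Bs x -> eff_div_deg (family_divisor x) (family_deg x).
Proof.
move=> /forallP x_wf; exists (map fplace (enum {: index})); split.
- exact/NoDup_map_uniq/enum_uniq/fplace_inj.
- move=> P; case: (boolP [exists p, eq_place (fplace p) P]) => [/existsP [p /eq_placeP <-] _|].
    by apply/List.in_map_iff; exists p; split; last exact/In_mem/mem_enum.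
  rewrite negb_exists => /forallP P_out.
  by rewrite /family_divisor big_pred0 // => p; apply/negbTE/P_out.
exists place_deg; split.
  by move=> P /List.in_map_iff [p [<- _]]; rewrite place_deg_fplace; apply: f_deg.
rewrite big_map big_enum /=.
under eq_bigr => p _ do rewrite family_divisor_fplace place_deg_fplace.
rewrite -(@sig_big_dep _ 0%N addn _ (fun r : 'I_n => 'I_(Bs r)) xpredT (fun r => xpredT)
  (fun r i => x r (inord i) * r)%N) /family_deg.
by apply: eq_bigr => r _; rewrite -big_distrl mulnC (msize_multiset_on (Bs_le (ltn_ord r))).
Qed.

Lemma weighted_count_le (R : numFieldType) (Q : R) (A : nat -> nat) L (V : pred mfamily) :
  0 < Q -> (forall k, card_is (fun D : place iota -> nat => eff_div_deg D k) (A k)) ->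
  (forall x, V x -> wf_family Bs x /\ (family_deg x <= L)%N) ->
  \sum_(x | V x) (Q ^+ family_deg x)^-1 <= \sum_(0 <= k < L.+1) (A k)%:R / Q ^+ k.
Proof.
move=> Q_gt0 hA hV; have deg_lt x : V x -> (family_deg x < L.+1)%N.
  by move=> /hV [_]; rewrite ltnS.
rewrite (partition_big (fun x => inord (family_deg x) : 'I_L.+1) xpredT) //= big_mkord.
apply: ler_sum => k _; rewrite (eq_bigr (fun _ => (Q ^+ k)^-1)); last first.
  by move=> x /andP [Vx /eqP <-]; rewrite inordK ?deg_lt.
rewrite sumr_const -[_ *+ _]mulr_natr mulrC ler_pM2r ?invr_gt0 ?exprn_gt0 // ler_nat.
apply: (card_le_card_is (hA k))
  => [x1 x2 /andP [/hV [wf1 _] _] /andP [/hV [wf2 _] _]|x /andP [Vx /eqP <-]].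
  exact: family_divisor_inj.
by rewrite inordK ?deg_lt //; apply/family_divisor_eff; case: (hV x Vx).
Qed.

End PlaceFamilies.

Definition base_hi (L r : nat) : nat := (if r == 1 then L else 0)%N.

Definition residue_lo (p r : nat) : nat := r == p.

Definition residue_hi (L p r : nat) : nat :=
  (if r == 1 then L %% p else if r == p then L %/ p else 0)%N.

Lemma base_box_deg L : (\sum_(r < L.+2) r * base_hi L r)%N = L.
Proof.
rewrite (big_ord_only1 _ (i := 1) (F := fun r => r * base_hi L r)%N) ?mul1n //.
by move=> r; rewrite /base_hi => /negbTE ->; rewrite muln0.
Qed.

Lemma residue_box_deg L p : (1 < p < L.+2)%N ->
  (\sum_(r < L.+2) r * residue_hi L p r)%N = L.
Proof.
case/andP => p_gt1 lt_pL.
rewrite (big_ord_only2 _ (i := 1) (j := p) (F := fun r => r * residue_hi L p r)%N)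
  ?(ltn_eqF p_gt1) //.
  by rewrite /residue_hi eqxx (gtn_eqF p_gt1) eqxx mul1n /= addnC mulnC -divn_eq.
by move=> r r1 rp; rewrite /residue_hi (negbTE r1) (negbTE rp) muln0.
Qed.

(* [B 0] is unconstrained: there are no places of degree 0. *)
Definition Bpos (B : nat -> nat) (r : nat) : nat := if r is 0 then 0%N else B r.

Lemma BposE B r : (0 < r)%N -> Bpos B r = B r.
Proof. by case: r. Qed.

Section SigmaBounds.
Variables (K : finFieldType) (F : fieldType) (iota : {rmorphism K -> F}).
Variables (R : numFieldType) (Q : R) (A B : nat -> nat).
Hypothesis Q_gt0 : 0 < Q.
Hypothesis hA : forall k, card_is (fun D : place iota -> nat => eff_div_deg D k) (A k).
Hypothesis hB : forall r, (1 <= r)%N -> card_is (fun P : place iota => is_degree P r) (B r).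

Lemma places_of_degree_enum : exists f : forall r, 'I_(Bpos B r) -> place iota,
  (forall r, injective (@f r)) /\ (forall r i, is_degree (@f r i) r).
Proof.
have hf r : exists fr : 'I_(Bpos B r) -> place iota,
    injective fr /\ forall i, is_degree (fr i) r.
  case: r => [|r].
    by exists (fun i : 'I_0 => False_rect _ (notF (ltn_ord i))); split => -[].
  have [fr [fr_inj fr_onto]] := hB (ltn0Sn r); exists fr; split => // i.
  by apply/fr_onto; exists i.
exists (fun r => sval (constructive_indefinite_description _ (hf r))).
by split=> r; case: constructive_indefinite_description => fr [].
Qed.

Lemma boxes_bound (I : eqType) (s : seq I) (lo hi : I -> nat -> nat) n L :
  uniq s ->
  (forall i j, i \in s -> j \in s -> i != j ->
     exists2 r, (r < n)%N & (hi i r < lo j r)%N || (hi j r < lo i r)%N) ->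
  (forall i, i \in s -> (\sum_(r < n) r * hi i r <= L)%N) ->
  \sum_(i <- s) \prod_(r < n) mset_series Q r (Bpos B r) (lo i r) (hi i r)
  <= \sum_(0 <= k < L.+1) (A k)%:R / Q ^+ k.
Proof.
move=> s_uniq s_disj s_deg; have [f [f_inj f_deg]] := places_of_degree_enum.
pose N := (\max_(r < n) Bpos B r)%N; pose G := (\max_(i <- s) \max_(r < n) hi i r)%N.
have Bs_le r : (r < n)%N -> (Bpos B r <= N.+1)%N.
  by move=> lt_rn; apply: leqW; rewrite /N (bigD1 (Ordinal lt_rn)) //= leq_maxl.
have hi_le i r : i \in s -> (r < n)%N -> (hi i r <= G)%N.
  move=> si lt_rn; apply: leq_trans (leq_bigmax_seq _ si isT).
  by rewrite (bigD1 (Ordinal lt_rn)) //= leq_maxl.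
have -> : \sum_(i <- s) \prod_(r < n) mset_series Q r (Bpos B r) (lo i r) (hi i r)
    = \sum_(i <- s) \sum_(x | @in_box n N G (Bpos B) (lo i) (hi i) x) (Q ^+ family_deg x)^-1.
  rewrite big_seq [RHS]big_seq; apply: eq_bigr => i si.
  by rewrite box_weight // => r; apply: hi_le.
rewrite -big_has_disjoint //.
  apply: (weighted_count_le Bs_le f_inj f_deg Q_gt0 hA) => x /hasP [i si x_in].
  by split; [exact: in_box_wf x_in|exact: leq_trans (family_deg_box x_in) (s_deg i si)].
move=> i j x si sj ij; have [r lt_rn /orP [lt|lt]] := s_disj i j si sj ij => xi xj.
  exact: (in_box_disjoint (r := Ordinal lt_rn) lt xi xj).
exact: (in_box_disjoint (r := Ordinal lt_rn) lt xj xi).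
Qed.

Lemma degree_box_bound L (m : nat -> nat) :
  (\sum_(1 <= r < L.+1 | (0 < B r)%N) r * m r <= L)%N ->
  \prod_(1 <= r < L.+1 | (0 < B r)%N) mset_series Q r (B r) 0 (m r)
  <= \sum_(0 <= k < L.+1) (A k)%:R / Q ^+ k.
Proof.
pose hi r := if (0 < r)%N && (0 < B r)%N then m r else 0%N.
have weightE r : mset_series Q r (Bpos B r) 0 (hi r)
    = if (0 < r)%N && (0 < B r)%N then mset_series Q r (B r) 0 (m r) else 1.
  by rewrite /hi; case: r => [|r] /=; [|case: ifP]; rewrite // mset_series00.
have degE r : (r * hi r = if (0 < r) && (0 < B r) then r * m r else 0)%N.
  by rewrite /hi; case: ifP; rewrite ?muln0.
move=> hm; have hdeg : (\sum_(r < L.+1) r * hi r <= L)%N.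
  under eq_bigr => r _ do rewrite degE.
  have := @big_ord_cond_pos _ 0%N addn L (fun r => 0 < B r)%N (fun r => r * m r)%N.
  by rewrite /= => ->.
have := @boxes_bound _ [:: tt] (fun _ _ => 0%N) (fun _ => hi) L.+1 L isT _ (fun _ _ => hdeg).
rewrite big_seq1 /=; under eq_bigr => r _ do rewrite weightE.
have := @big_ord_cond_pos _ 1 *%R L (fun r => 0 < B r)%N
  (fun r => mset_series Q r (B r) 0 (m r)).
by rewrite /= => ->; apply=> -[] [].
Qed.

Lemma base_box_weight L :
  \prod_(r < L.+2) mset_series Q r (Bpos B r) 0 (base_hi L r) = mset_series Q 1 (B 1) 0 L.
Proof.
rewrite (big_ord_only1 _ (i := 1)
  (F := fun r => mset_series Q r (Bpos B r) 0 (base_hi L r))) //.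
by move=> r r1; rewrite /base_hi (negbTE r1) mset_series00.
Qed.

Lemma residue_box_weight L p : (1 < p < L.+2)%N ->
  \prod_(r < L.+2) mset_series Q r (Bpos B r) (residue_lo p r) (residue_hi L p r)
  = mset_series Q 1 (B 1) 0 (L %% p) * (mset_series Q p (B p) 0 (L %/ p) - 1).
Proof.
case/andP => p_gt1 lt_pL.
rewrite (big_ord_only2 _ (i := 1) (j := p) (F := fun r =>
  mset_series Q r (Bpos B r) (residue_lo p r) (residue_hi L p r))) ?(ltn_eqF p_gt1) //.
  rewrite /residue_lo /residue_hi /= eqxx (gtn_eqF p_gt1) BposE ?(ltnW p_gt1) //.
  by rewrite eq_sym (gtn_eqF p_gt1) mset_series1.
by move=> r r1 rp; rewrite /residue_lo /residue_hi (negbTE r1) (negbTE rp) mset_series00.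
Qed.

Lemma residue_boxes_bound L (rs : seq nat) : uniq rs ->
  (forall r, r \in rs -> (2 <= r <= L)%N) ->
  mset_series Q 1 (B 1) 0 L
  + \sum_(r <- rs) mset_series Q 1 (B 1) 0 (L %% r) * (mset_series Q r (B r) 0 (L %/ r) - 1)
  <= \sum_(0 <= k < L.+1) (A k)%:R / Q ^+ k.
Proof.
move=> rs_uniq rs_range.
have rs_lt p : p \in rs -> (1 < p < L.+2)%N.
  by move/rs_range => /andP [-> le_pL]; rewrite ltnS ltnW.
have memS p : (Some p \in None :: map Some rs) = (p \in rs).
  by rewrite inE (mem_map (@Some_inj _)).
pose lo (i : option nat) := if i is Some p then residue_lo p else fun=> 0%N.
pose hi (i : option nat) := if i is Some p then residue_hi L p else base_hi L.
have := @boxes_bound _ (None :: map Some rs) lo hi L.+2 L _ _ _.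
rewrite big_cons big_map base_box_weight big_seq.
under eq_bigr => p /rs_lt p_lt do rewrite /= residue_box_weight //.
rewrite -big_seq; apply.
- by rewrite /= (map_inj_uniq (@Some_inj _)) rs_uniq andbT; apply/negP => /mapP [].
- have hi_p q p : p \in rs -> Some p != q -> hi q p = 0%N.
    move=> /rs_lt /andP [p_gt1 _]; case: q => [q|] pq.
      rewrite /= /residue_hi (gtn_eqF p_gt1).
      by move: pq; rewrite (inj_eq (@Some_inj _)) => /negbTE ->.
    by rewrite /= /base_hi (gtn_eqF p_gt1).
  have lo_p p : lo (Some p) p = 1%N by rewrite /= /residue_lo eqxx.
  move=> [p|] j //; last case: j => [q|] //.
  - rewrite memS => p_in _ pj; have /andP [_ lt_pL] := rs_lt p p_in.
    by exists p => //; rewrite lo_p (hi_p j p) ?orbT.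
  - rewrite memS => _ q_in _; have /andP [_ lt_qL] := rs_lt q q_in.
    by exists q => //; rewrite lo_p (hi_p None q).
- by move=> [p|] /=; [rewrite memS => /rs_lt /residue_box_deg ->|rewrite base_box_deg].
Qed.

End SigmaBounds.

Theorem theorem3p8 (q : nat) (K : finFieldType) (F : fieldType)
  (iota : {rmorphism K -> F}) (g : nat) (A B : nat -> nat) :
  #|K| = q ->
  is_function_field iota ->
  full_constant_field iota ->
  is_genus iota g -> (2 <= g)%N ->
  (forall n : nat, card_is (fun D : place iota -> nat => eff_div_deg D n) (A n)) ->
  (forall r : nat, (1 <= r)%N ->
     card_is (fun P : place iota => is_degree P r) (B r)) ->
  let Q : rat := q%:R in
  let Sigma2 : rat := Q ^+ (g - 1) * \sum_(0 <= n < g - 1) (A n)%:R / Q ^+ n in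
  let Sr (r M : nat) : rat :=
    \sum_(0 <= b < M.+1) (Q ^+ (r * b))^-1 * ('C(B r + b - 1, b))%:R in
  ((1 <= B 1)%N ->
   forall m : nat -> nat,
     (\sum_(1 <= r < g - 1 | (1 <= B r)%N) r * m r <= g - 2)%N ->
     Q ^+ (g - 1) * \prod_(1 <= r < g - 1 | (1 <= B r)%N) Sr r (m r) <= Sigma2)
  /\
  (forall rs : seq nat, uniq rs ->
     (forall r, r \in rs -> (2 <= r <= g - 2)%N /\ (1 <= B r)%N) ->
     Q ^+ (g - 1) * Sr 1%N (g - 2)%N
     + Q ^+ (g - 1) * \sum_(r <- rs)
         (Sr 1%N ((g - 2) %% r)%N * (Sr r ((g - 2) %/ r)%N - 1))
     <= Sigma2).
Proof.
move=> hq _ _ _ g_ge2 hA hB Q Sigma2 Sr.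
have Q_gt0 : 0 < Q by rewrite ltr0n -hq (ltn_trans _ (card_finNzRing_gt1 K)).
have Qg_ge0 : 0 <= Q ^+ (g - 1) by rewrite exprn_ge0 // ltW.
have g1E : (g - 1 = (g - 2).+1)%N by rewrite -subSn.
rewrite /Sigma2 [in \sum_(_ <= _ < _) _]g1E; split=> [_ m hm|rs rs_uniq rs_range].
  rewrite ler_wpM2l // g1E; apply: (degree_box_bound Q_gt0 hA hB).
  by rewrite -g1E.
rewrite -mulrDr ler_wpM2l //; apply: (residue_boxes_bound Q_gt0 hA hB rs_uniq).
by move=> r /rs_range [].
Qed.
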